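(* For all integers $v\ge w\ge 2$ and $t\ge 2$ with $w\le\lfloor t^2/4\rfloor+t$, we have $v-w+1\le I_t(w,v)\le v$.
   Context: A $(w,v)$ set system is a pair $(\mathcal{X},\mathcal{B})$ with $|\mathcal{X}|=v$ and $\mathcal{B}$ a family of $w$-element subsets (blocks) of $\mathcal{X}$. For a $w$-subset $T\subseteq\mathcal{X}$ let $P_t(T)=\{\mathcal{P}\subseteq\mathcal{B}: |\mathcal{P}|\le t,\ T\subseteq\bigcup_{B\in\mathcal{P}}B\}$. The set system is a $t$-IPPS$(w,v)$ if for every $w$-subset $T\subseteq\mathcal{X}$, either $P_t(T)=\emptyset$ or $\bigcap_{\mathcal{P}\in P_t(T)}\mathcal{P}\neq\emptyset$. $I_t(w,v)$ denotes the maximum of $|\mathcal{B}|$ over all $t$-IPPS$(w,v)$. *)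

From mathcomp Require Import all_boot.
Set Implicit Arguments. Unset Strict Implicit. Unset Printing Implicit Defensive.

Definition Pt (v t : nat) (B : {set {set 'I_v}}) (T : {set 'I_v})
  : {set {set {set 'I_v}}} :=
  [set P : {set {set 'I_v}} |
     [&& P \subset B, #|P| <= t & T \subset \bigcup_(Bl in P) Bl]].

Definition is_IPPS (t w v : nat) (B : {set {set 'I_v}}) : bool :=
  [forall Bl in B, #|Bl| == w] &&
  [forall T : {set 'I_v}, (#|T| == w) ==>
     ((Pt t B T == set0) || (\bigcap_(P in Pt t B T) P != set0))].

Definition I_t (t w v : nat) : nat :=
  \max_(B : {set {set 'I_v}} | is_IPPS t w B) #|B|.

From mathcomp Require Import all_boot zify.
Set Implicit Arguments. Unset Strict Implicit. Unset Printing Implicit Defensive.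

(* Lower bound: for |K| = w - 1 the sunflower {x |: K : x \notin K} is a
   t-IPPS, because a w-set T has a point x outside K and the only block through
   x lies in every cover of T.

   Upper bound: every nonempty t-IPPS with w <= t + k r, where k + r = t,
   has a block B with a private point; deleting B shrinks the union
   of the blocks, so |F| <= |cover F| <= v, and k = t/2 gives the hypothesis
   w <= t^2/4 + t.  Suppose instead that every point of every block lies in a
   second block.  No block C is covered by t other blocks, since the w-set C
   would then have two disjoint covers.  Hence greedily t blocks G, B \notin G,
   meet B in at least t points.  Pick k of them, Cs.  Each C in Cs has at least
   r points outside B and the other members of Cs: otherwise B, Cs :\ C and a
   second block through each such point cover C with at most t blocks.  Taking
   r such points in each C and t points of B :&: cover G gives t + k r >= w
   points; a w-subset T of them is covered by B |: Cs, by G (which avoids B)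
   and, for every C in Cs, by a family of at most t blocks avoiding C.  So no
   block is common to all covers of T. *)

Lemma exists_subset_card (T : finType) (A : {set T}) n :
  n <= #|A| -> exists2 B : {set T}, B \subset A & #|B| = n.
Proof.
case/card_geqP => s [uniq_s size_s sA].
exists [set x in s]; last by rewrite cardsE (card_uniqP uniq_s).
by apply/subsetP => x; rewrite inE => /sA.
Qed.

Lemma card_bigcup_disjoint (I T : finType) (J : {pred I}) (f : I -> {set T}) :
  {in J &, forall i j, i != j -> [disjoint f i & f j]} ->
  #|\bigcup_(i in J) f i| = \sum_(i in J) #|f i|.
Proof.
move=> disj_f; pose g i := if i \in J then f i else set0.
have -> : \bigcup_(i in J) f i = \bigcup_i g i by rewrite big_mkcond.
rewrite -sum1_card partition_disjoint_bigcup => [|i j neq_ij]; last first.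
  rewrite /g -setI_eq0; case: ifP => Ji; case: ifP => Jj; rewrite ?set0I ?setI0 //.
  by rewrite setI_eq0 disj_f.
rewrite [RHS]big_mkcond; apply: eq_bigr => i _; rewrite /g.
by case: ifP => _; rewrite sum1_card ?cards0.
Qed.

Lemma sqr_div4_le t : t ^ 2 %/ 4 <= t./2 * (t - t./2).
Proof. rewrite -divn2; nia. Qed.

Section IPPS.

Variables t w v : nat.
Implicit Types (F G P : {set {set 'I_v}}) (C T : {set 'I_v}).

Lemma in_Pt F T P :
  (P \in Pt t F T) = [&& P \subset F, #|P| <= t & T \subset cover P].
Proof. by rewrite inE. Qed.

Lemma IPPS_card_block F C : is_IPPS t w F -> C \in F -> #|C| = w.
Proof. by case/andP => /forall_inP card_F _ /card_F /eqP. Qed.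

Lemma IPPS_common_block F T P0 :
  is_IPPS t w F -> #|T| = w -> P0 \in Pt t F T ->
  exists C, forall P, P \in Pt t F T -> C \in P.
Proof.
case/andP => _ /forallP/(_ T) + card_T P0T; rewrite card_T eqxx /=.
case/orP => [/eqP Pt0 | /set0Pn[C /bigcapP]]; last by exists C.
by rewrite Pt0 inE in P0T.
Qed.

Lemma IPPS_subset F F' : is_IPPS t w F -> F' \subset F -> is_IPPS t w F'.
Proof.
move=> IPPS_F sF'F; have PtS T : Pt t F' T \subset Pt t F T.
  by apply/subsetP => P; rewrite !in_Pt => /andP[sPF' ->]; rewrite (subset_trans sPF').
apply/andP; split.
  by apply/forall_inP => C /(subsetP sF'F)/(IPPS_card_block IPPS_F) ->.
apply/forallP => T; apply/implyP => /eqP card_T.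
case: (set_0Vmem (Pt t F' T)) => [-> | [P0 P0T]]; first by rewrite eqxx.
have [C C_Pt] := IPPS_common_block IPPS_F card_T (subsetP (PtS T) _ P0T).
apply/orP; right; apply/set0Pn; exists C; apply/bigcapP => P PT.
exact/C_Pt/(subsetP (PtS T)).
Qed.

Lemma IPPS_block_not_covered F C G :
  is_IPPS t w F -> 0 < t -> C \in F -> G \subset F -> C \notin G ->
  #|G| <= t -> ~~ (C \subset cover G).
Proof.
move=> IPPS_F t_gt0 CF GF CG card_G; apply/negP => C_G.
have C_Pt : [set C] \in Pt t F C by rewrite in_Pt sub1set CF cards1 t_gt0 cover1 subxx.
have [D D_Pt] := IPPS_common_block IPPS_F (IPPS_card_block IPPS_F CF) C_Pt.
have /set1P eDC := D_Pt _ C_Pt.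
by move: CG; rewrite -eDC D_Pt // in_Pt GF card_G.
Qed.

End IPPS.

Lemma leq_I_t t w v (F : {set {set 'I_v}}) : is_IPPS t w F -> #|F| <= I_t t w v.
Proof. by move=> IPPS_F; rewrite /I_t; apply: leq_bigmax_cond. Qed.

Definition sunflower (T : finType) (K : {set T}) : {set {set T}} :=
  [set x |: K | x in ~: K].

Lemma card_sunflower (T : finType) (K : {set T}) : #|sunflower K| = #|~: K|.
Proof.
apply: card_in_imset => x y; rewrite !inE => xK _ eq_xy.
have /setU1P[// | xK'] : x \in y |: K by rewrite -eq_xy setU11.
by rewrite xK' in xK.
Qed.

Lemma sunflower_IPPS t w v (K : {set 'I_v}) :
  0 < w -> #|K| = w.-1 -> is_IPPS t w (sunflower K).
Proof.
move=> w_gt0 card_K; apply/andP; split.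
  apply/forall_inP => C /imsetP[x]; rewrite inE => xK ->.
  by rewrite cardsU1 xK card_K add1n prednK.
apply/forallP => T; apply/implyP => /eqP card_T; apply/orP; right.
have /subsetPn[x xT xK] : ~~ (T \subset K).
  by apply/negP => /subset_leq_card; lia.
apply/set0Pn; exists (x |: K); apply/bigcapP => P; rewrite in_Pt => /and3P[PF _ TP].
have /bigcupP[D DP xD] := subsetP TP x xT.
have /imsetP[y _ eD] := subsetP PF D DP.
move: xD; rewrite eD => /setU1P[exy | xK']; first by rewrite exy -eD.
by rewrite xK' in xK.
Qed.

Lemma I_t_lower t w v : 0 < w -> w <= v -> v - w + 1 <= I_t t w v.
Proof.
move=> w_gt0 w_le_v.
have [K _ card_K] : exists2 K : {set 'I_v}, K \subset [set: 'I_v] & #|K| = w.-1.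
  by apply: exists_subset_card; rewrite cardsT card_ord; lia.
apply: leq_trans _ (leq_I_t (sunflower_IPPS t w_gt0 card_K)).
by rewrite card_sunflower; have := cardsC K; rewrite card_K card_ord; lia.
Qed.

Section PrivatePoint.

Variables (t w v k r : nat) (F : {set {set 'I_v}}).
Hypotheses (IPPS_F : is_IPPS t w F) (t_split : k + r = t) (r_gt0 : 0 < r).
Hypothesis w_le : w <= t + k * r.
(* Assumed towards a contradiction (alt_absurd): no block has a private point. *)
Variable alt : {set 'I_v} -> 'I_v -> {set 'I_v}.
Hypothesis altP : forall C x, C \in F -> x \in C ->
  [/\ alt C x \in F, x \in alt C x & alt C x != C].
Variable B : {set 'I_v}.
Hypothesis BF : B \in F.
Implicit Types C X Z : {set 'I_v}.

Let t_gt0 : 0 < t. Proof. by rewrite -t_split addn_gt0 r_gt0 orbT. Qed.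

Lemma exists_partial_cover n : n <= t ->
  exists G : {set {set 'I_v}}, [/\ G \subset F, B \notin G, #|G| = n & n <= #|B :&: cover G|].
Proof.
elim: n => [|n IHn] n_lt_t; first by exists set0; rewrite sub0set inE cards0.
have [G [GF BG card_G BG_n]] := IHn (ltnW n_lt_t).
have /subsetPn[x xB xG] : ~~ (B \subset cover G).
  by apply: (IPPS_block_not_covered IPPS_F t_gt0) => //; rewrite card_G ltnW.
have [altF x_alt alt_neq] := altP BF xB.
have altG : alt B x \notin G.
  by apply: contra xG => altG; apply/bigcupP; exists (alt B x).
exists (alt B x |: G); split.
- by rewrite subUset sub1set altF GF.
- by rewrite !inE negb_or eq_sym alt_neq BG.
- by rewrite cardsU1 altG card_G.
have -> : cover (alt B x |: G) = alt B x :|: cover G by rewrite /cover big_setU1.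
apply: leq_trans (_ : #|x |: (B :&: cover G)| <= _).
  by rewrite cardsU1 inE (negbTE xG) andbF add1n ltnS.
apply: subset_leq_card; rewrite subUset sub1set inE in_setU xB x_alt.
by rewrite setIS ?subsetUr.
Qed.

Section Reroute.

Variables G Cs : {set {set 'I_v}}.
Hypotheses (GF : G \subset F) (BG : B \notin G) (card_G : #|G| = t).
Hypotheses (BG_t : t <= #|B :&: cover G|) (CsG : Cs \subset G) (card_Cs : #|Cs| = k).

Let CsF : Cs \subset F := subset_trans CsG GF.

Let BCs : B \notin Cs := contra (subsetP CsG B) BG.

Definition private_part C :=
  [set x in C | (x \notin B) && [forall C' in Cs, (x \in C') ==> (C' == C)]].

Definition reroute Z X := B |: (Cs :\ Z) :|: (alt Z @: X).

Lemma private_part_sub C : private_part C \subset C.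
Proof. by apply/subsetP => x; rewrite inE => /andP[]. Qed.

Lemma disjoint_private_part C C' :
  C' \in Cs -> C != C' -> [disjoint private_part C & private_part C'].
Proof.
move=> C'Cs neq_CC'; rewrite -setI_eq0; apply/eqP/setP => x; rewrite !inE.
apply/negP => /andP[/and3P[_ _ /forall_inP/(_ C' C'Cs) only_C] /andP[xC' _]].
by move: only_C; rewrite xC' eq_sym (negbTE neq_CC').
Qed.

Lemma disjoint_private_part_B C : [disjoint B & private_part C].
Proof.
rewrite -setI_eq0; apply/eqP/setP => x; rewrite !inE.
by case: (x \in B); rewrite ?andbF.
Qed.

Lemma block_sub_private_part C : C \in Cs ->
  C \subset B :|: \bigcup_(C' in Cs :\ C) C' :|: private_part C.
Proof.
move=> CCs; apply/subsetP => x xC.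
have [xB | xB] := boolP (x \in B); first by rewrite !inE xB.
have [only_C | /forall_inPn[C' C'Cs]] := boolP [forall C' in Cs, (x \in C') ==> (C' == C)].
  by rewrite !inE xC xB only_C orbT.
rewrite negb_imply => /andP[xC' C'C]; apply/setUP; left; apply/setUP; right.
by apply/bigcupP; exists C'; rewrite // !inE C'C.
Qed.

Lemma reroute_sub Z X : Z \in Cs -> X \subset Z -> reroute Z X \subset F.
Proof.
move=> ZCs XZ; rewrite !subUset sub1set BF (subset_trans (subsetDl _ _) CsF) /=.
apply/subsetP => _ /imsetP[x xX ->].
by case: (altP (subsetP CsF _ ZCs) (subsetP XZ _ xX)).
Qed.

Lemma reroute_avoid Z X : Z \in Cs -> X \subset Z -> Z \notin reroute Z X.
Proof.
move=> ZCs XZ; have ZB : Z != B by apply: contraNneq BCs => <-.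
rewrite !inE eqxx (negbTE ZB) /=; apply/imsetP => -[x xX eZ].
by have [_ _] := altP (subsetP CsF _ ZCs) (subsetP XZ _ xX); rewrite -eZ eqxx.
Qed.

Lemma card_reroute Z X : Z \in Cs -> #|reroute Z X| <= k + #|X|.
Proof.
move=> ZCs; rewrite -card_Cs (cardsD1 Z Cs) ZCs -addnA.
apply: leq_trans (leq_card_setU _ _).1 _; rewrite addnA.
by apply: leq_add; [rewrite cardsU1 leq_add2r leq_b1 | exact: leq_imset_card].
Qed.

Lemma sub_cover_reroute Z X : Z \in Cs -> X \subset Z ->
  B :|: \bigcup_(C in Cs :\ Z) C :|: X \subset cover (reroute Z X).
Proof.
move=> ZCs XZ; rewrite /cover !subUset -andbA; apply/and3P; split.
- by apply: bigcup_sup; rewrite !inE eqxx.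
- by apply/bigcupsP => C CZ; apply: bigcup_sup; rewrite in_setU in_setU1 CZ orbT.
apply/subsetP => x xX; have [_ x_alt _] := altP (subsetP CsF _ ZCs) (subsetP XZ _ xX).
by apply/bigcupP; exists (alt Z x); rewrite // in_setU (imset_f (alt Z) xX) orbT.
Qed.

Lemma card_private_part C : C \in Cs -> r <= #|private_part C|.
Proof.
move=> CCs; rewrite leqNgt; apply/negP => small.
have XC := private_part_sub C.
have card_le : #|reroute C (private_part C)| <= t.
  by apply: leq_trans (card_reroute _ CCs) _; lia.
have /negP[] := IPPS_block_not_covered IPPS_F t_gt0 (subsetP CsF _ CCs) (reroute_sub CCs XC)
  (reroute_avoid CCs XC) card_le.
exact: subset_trans (block_sub_private_part CCs) (sub_cover_reroute CCs XC).
Qed.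

Definition sample C := odflt set0 [pick X : {set 'I_v} | (X \subset private_part C) && (#|X| == r)].

Lemma sample_spec C : C \in Cs -> sample C \subset private_part C /\ #|sample C| = r.
Proof.
move=> CCs; rewrite /sample; case: pickP => [X /andP[XC /eqP card_X] | none] //=.
have [X XC card_X] := exists_subset_card (card_private_part CCs).
by have := none X; rewrite XC card_X eqxx.
Qed.

Lemma sample_sub C : C \in Cs -> sample C \subset C.
Proof.
by move=> CCs; apply: subset_trans (private_part_sub C); case: (sample_spec CCs).
Qed.

Definition witness := (B :&: cover G) :|: \bigcup_(C in Cs) sample C.

Lemma card_witness : t + k * r <= #|witness|.
Proof.
have disj : [disjoint B :&: cover G & \bigcup_(C in Cs) sample C].
  apply: bigcup_disjoint => C CCs; apply: disjointWl (subsetIl _ _) _.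
  by apply: disjointWr (disjoint_private_part_B C); case: (sample_spec CCs).
rewrite cardsU (disjoint_setI0 disj) cards0 subn0 card_bigcup_disjoint; last first.
  move=> C C' CCs C'Cs neq; apply: disjointWl (proj1 (sample_spec CCs)) _.
  exact: disjointWr (proj1 (sample_spec C'Cs)) (disjoint_private_part C'Cs neq).
rewrite (eq_bigr (fun=> r)) => [|C /sample_spec[] //].
by rewrite sum_nat_const card_Cs leq_add2r.
Qed.

Lemma witness_sub_cover_G : witness \subset cover G.
Proof.
rewrite subUset subsetIr; apply/bigcupsP => C CCs.
exact: subset_trans (sample_sub CCs) (bigcup_sup _ (subsetP CsG _ CCs)).
Qed.

Lemma witness_sub_cover_blocks : witness \subset cover (B |: Cs).
Proof.
rewrite subUset (subset_trans (subsetIl _ _) (bigcup_sup _ (setU11 _ _))) /=.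
apply/bigcupsP => C CCs; apply: subset_trans (sample_sub CCs) (bigcup_sup _ _).
by rewrite in_setU1 CCs orbT.
Qed.

Lemma witness_sub_cover_reroute Z :
  Z \in Cs -> witness \subset cover (reroute Z (sample Z)).
Proof.
move=> ZCs; apply: subset_trans (sub_cover_reroute ZCs (sample_sub ZCs)).
apply/subsetP => x /setUP[/setIP[xB _] | /bigcupP[C CCs xC]]; rewrite !in_setU ?xB //.
case: (eqVneq C Z) => [eCZ | CZ]; first by rewrite -eCZ xC orbT.
apply/orP; left; apply/orP; right; apply/bigcupP; exists C; first by rewrite !inE CZ.
exact: subsetP (sample_sub CCs) _ xC.
Qed.

Lemma alt_absurd : False.
Proof.
have [T TW card_T] := exists_subset_card (leq_trans w_le card_witness).
have Pt_T (P : {set {set 'I_v}}) : P \subset F -> #|P| <= t -> witness \subset cover P -> P \in Pt t F T.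
  by move=> PF card_P WP; rewrite in_Pt PF card_P (subset_trans TW WP).
have BCs_Pt : B |: Cs \in Pt t F T.
  apply: Pt_T witness_sub_cover_blocks; first by rewrite subUset sub1set BF CsF.
  by rewrite cardsU1 BCs card_Cs; lia.
have [D D_Pt] := IPPS_common_block IPPS_F card_T BCs_Pt.
have G_Pt : G \in Pt t F T := Pt_T _ GF (eq_leq card_G) witness_sub_cover_G.
case/setU1P: (D_Pt _ BCs_Pt) => [eDB | DCs]; first by move: BG; rewrite -eDB (D_Pt _ G_Pt).
have DX := sample_sub DCs.
have R_Pt : reroute D (sample D) \in Pt t F T.
  apply: Pt_T (reroute_sub DCs DX) _ (witness_sub_cover_reroute DCs).
  by apply: leq_trans (card_reroute _ DCs) _; rewrite (proj2 (sample_spec DCs)) t_split.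
by have := reroute_avoid DCs DX; rewrite (D_Pt _ R_Pt).
Qed.

End Reroute.

End PrivatePoint.

Lemma IPPS_private_point t w v k r (F : {set {set 'I_v}}) :
  is_IPPS t w F -> k + r = t -> 0 < r -> w <= t + k * r -> F != set0 ->
  exists2 B, B \in F & exists2 x, x \in B & forall C, C \in F -> x \in C -> C = B.
Proof.
move=> IPPS_F t_split r_gt0 w_le /set0Pn[B BF].
have [/exists_inP[C CF /exists_inP[x xC /forall_inP only_C]] | no_private] :=
  boolP [exists C in F, exists x in C, [forall D in F, (x \in D) ==> (D == C)]].
  by exists C => //; exists x => // D DF xD; apply/eqP/(implyP (only_C D DF)).
pose alt C x := odflt C [pick D in F | (x \in D) && (D != C)].
have altP C x : C \in F -> x \in C -> [/\ alt C x \in F, x \in alt C x & alt C x != C].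
  move=> CF xC; rewrite /alt; case: pickP => [D /and3P[DF xD DC] | none] //=.
  case/negP: no_private; apply/exists_inP; exists C => //; apply/exists_inP; exists x => //.
  apply/forall_inP => D DF; apply/implyP => xD; apply: contraT => DC.
  by have := none D; rewrite DF xD DC.
have [G [GF BG card_G BG_t]] := exists_partial_cover IPPS_F t_split r_gt0 altP BF (leqnn t).
have [Cs CsG card_Cs] : exists2 Cs : {set {set 'I_v}}, Cs \subset G & #|Cs| = k.
  by apply: exists_subset_card; rewrite card_G -t_split leq_addr.
by case: (alt_absurd IPPS_F t_split r_gt0 w_le altP BF GF BG card_G BG_t CsG card_Cs).
Qed.

Lemma IPPS_card_le_cover t w v k r (F : {set {set 'I_v}}) :
  is_IPPS t w F -> k + r = t -> 0 < r -> w <= t + k * r -> #|F| <= #|cover F|.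
Proof.
move=> + t_split r_gt0 w_le; have [n] := ubnP #|F|; elim: n F => // n IHn F.
rewrite ltnS => card_F IPPS_F.
have [-> | F_neq0] := eqVneq F set0; first by rewrite cards0.
have [B BF [x xB only_B]] := IPPS_private_point IPPS_F t_split r_gt0 w_le F_neq0.
have card_FB : #|F :\ B| < n by move: card_F; rewrite (cardsD1 B) BF.
have IPPS_FB := IPPS_subset IPPS_F (subsetDl F [set B]).
rewrite (cardsD1 B) BF add1n; apply: leq_ltn_trans (IHn _ card_FB IPPS_FB) (proper_card _).
apply/properP; split.
  by apply/bigcupsP => C /setD1P[_ CF]; apply: bigcup_sup.
exists x; first by apply/bigcupP; exists B.
by apply/bigcupP => -[C /setD1P[CB CF] xC]; move: CB; rewrite (only_B C CF xC) eqxx.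
Qed.

Theorem corollary3 (t w v : nat) :
  2 <= w -> w <= v -> 2 <= t -> w <= (t ^ 2) %/ 4 + t ->
  v - w + 1 <= I_t t w v <= v.
Proof.
move=> w_ge2 w_le_v t_ge2 w_le_t; apply/andP; split; first exact: I_t_lower (ltnW w_ge2) w_le_v.
have t_split : t./2 + (t - t./2) = t by rewrite -divn2; lia.
have r_gt0 : 0 < t - t./2 by rewrite -divn2; lia.
have w_le : w <= t + t./2 * (t - t./2).
  by apply: leq_trans w_le_t _; rewrite addnC leq_add2l sqr_div4_le.
apply/bigmax_leqP => F IPPS_F.
apply: leq_trans (IPPS_card_le_cover IPPS_F t_split r_gt0 w_le) _.
by rewrite -[X in _ <= X]card_ord max_card.
Qed.
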